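(* Let $R$ and $Q_R$ be as in the context. Then for every $q\in Q_R$ and every $\alpha\in(0,1)$, $$\zeta(q,\alpha)+e^{-i\pi q}\,\zeta(q,1-\alpha)\neq0 .$$
   Context: $\mathbb{H}_\mathbb{R}$ denotes the real quaternions $a+v_1e_1+v_2e_2+v_3e_3$ with $e_1^2=e_2^2=e_3^2=-1$, $e_1e_2=e_3$, $e_2e_3=e_1$, $e_3e_1=e_2$; $\mathbb{H}_\mathbb{C}$ the complex quaternions (complex coefficients, $i$ commuting with every $e_j$). For $q=a+v$, $v=\sum v_je_j$, $|v|=(\sum v_j^2)^{1/2}$. Quaternionic power: for $z\in\mathbb{C}\setminus\{0\}$, $p=b+u\in\mathbb{H}_\mathbb{R}$, $u\ne0$: $z^p:=z^b[\cos(|u|\log z)+\frac{u}{|u|}\sin(|u|\log z)]$ (principal $\log$, $z^b=e^{b\log z}$). Quaternionic Hurwitz zeta: $\zeta(q,a):=\sum_{k\ge0}(a+k)^{-q}$ for $a>0$, $\mathrm{Sc}\,q>1$; classical Hurwitz zeta: $\zeta(s,a)=\sum_{k\ge0}(a+k)^{-s}$. Exponentials $e^{q}:=\sum_j q^j/j!$ in $\mathbb{H}_\mathbb{C}$; for complex $w$, $e^{-i\pi w}$ is the usual complex exponential. Standing assumption: $R\subset\{w\in\mathbb{C}:\mathrm{Re}\,w>1\}$ is a set with $\overline R=R$ such that for every $w\in R$ and every $\alpha\in(0,1)$, $\zeta(w,\alpha)+e^{-i\pi w}\zeta(w,1-\alpha)\neq0$ (such nonempty regions, e.g. small rectangles or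 annular sectors around even integers $2n$, were constructed in earlier work). Define $Q_R:=\{q=a+v\in\mathbb{H}_\mathbb{R}: v\ne0,\ a+i|v|\in R\}$. *)

From Stdlib Require Import Reals Arith ClassicalEpsilon.
Open Scope R_scope.

Record Cx := mkC { Cre : R; Cim : R }.
Definition C0 : Cx := mkC 0 0.
Definition Cadd (z w : Cx) : Cx := mkC (Cre z + Cre w) (Cim z + Cim w).
Definition Copp (z : Cx) : Cx := mkC (- Cre z) (- Cim z).
Definition Cmul (z w : Cx) : Cx :=
  mkC (Cre z * Cre w - Cim z * Cim w) (Cre z * Cim w + Cim z * Cre w).
Definition Cconj (z : Cx) : Cx := mkC (Cre z) (- Cim z).
Definition Cscal (r : R) (z : Cx) : Cx := mkC (r * Cre z) (r * Cim z).
Definition Cexp (z : Cx) : Cx := mkC (exp (Cre z) * cos (Cim z)) (exp (Cre z) * sin (Cim z)).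
Definition Cpow_pos (x : R) (s : Cx) : Cx := Cexp (Cscal (ln x) s).
Definition C_minus_i_pi : Cx := mkC 0 (- PI).

Definition C_cv (u : nat -> Cx) (l : Cx) : Prop :=
  Un_cv (fun n => Cre (u n)) (Cre l) /\ Un_cv (fun n => Cim (u n)) (Cim l).
Fixpoint Cpartial (f : nat -> Cx) (n : nat) : Cx :=
  match n with
  | O => f O
  | S m => Cadd (Cpartial f m) (f (S m))
  end.
Definition C_series (f : nat -> Cx) : Cx :=
  epsilon (inhabits C0) (fun l => C_cv (Cpartial f) l).

Definition hurwitz (s : Cx) (a : R) : Cx :=
  C_series (fun k => Cpow_pos (a + INR k) (Copp s)).

Record Hq := mkH { q0 : R; q1 : R; q2 : R; q3 : R }.
Definition H0 : Hq := mkH 0 0 0 0.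
Definition Hadd (p q : Hq) : Hq := mkH (q0 p + q0 q) (q1 p + q1 q) (q2 p + q2 q) (q3 p + q3 q).
Definition Hopp (p : Hq) : Hq := mkH (- q0 p) (- q1 p) (- q2 p) (- q3 p).
Definition Hvnorm (p : Hq) : R := sqrt (q1 p ^ 2 + q2 p ^ 2 + q3 p ^ 2).
Definition Hvnonzero (p : Hq) : Prop := ~ (q1 p = 0 /\ q2 p = 0 /\ q3 p = 0).

Definition qpow_pos (x : R) (p : Hq) : Hq :=
  let xb := Rpower x (q0 p) in
  let nu := Hvnorm p in
  let t := nu * ln x in
  mkH (xb * cos t) (xb * (q1 p / nu * sin t))
      (xb * (q2 p / nu * sin t)) (xb * (q3 p / nu * sin t)).

Definition H_cv (u : nat -> Hq) (l : Hq) : Prop :=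
  Un_cv (fun n => q0 (u n)) (q0 l) /\ Un_cv (fun n => q1 (u n)) (q1 l) /\
  Un_cv (fun n => q2 (u n)) (q2 l) /\ Un_cv (fun n => q3 (u n)) (q3 l).
Fixpoint Hpartial (f : nat -> Hq) (n : nat) : Hq :=
  match n with
  | O => f O
  | S m => Hadd (Hpartial f m) (f (S m))
  end.
Definition H_series (f : nat -> Hq) : Hq :=
  epsilon (inhabits H0) (fun l => H_cv (Hpartial f) l).

Definition qzeta (q : Hq) (a : R) : Hq :=
  H_series (fun k => qpow_pos (a + INR k) (Hopp q)).

Record HC := mkHC { c0 : Cx; c1 : Cx; c2 : Cx; c3 : Cx }.
Definition HC0 : HC := mkHC C0 C0 C0 C0.
Definition HC1 : HC := mkHC (mkC 1 0) C0 C0 C0.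
Definition HCadd (p q : HC) : HC :=
  mkHC (Cadd (c0 p) (c0 q)) (Cadd (c1 p) (c1 q)) (Cadd (c2 p) (c2 q)) (Cadd (c3 p) (c3 q)).
Definition Csub (z w : Cx) : Cx := Cadd z (Copp w).
(* Hamilton product: e1^2=e2^2=e3^2=-1, e1e2=e3, e2e3=e1, e3e1=e2; i central *)
Definition HCmul (p q : HC) : HC :=
  mkHC
    (Csub (Csub (Csub (Cmul (c0 p) (c0 q)) (Cmul (c1 p) (c1 q))) (Cmul (c2 p) (c2 q))) (Cmul (c3 p) (c3 q)))
    (Csub (Cadd (Cadd (Cmul (c0 p) (c1 q)) (Cmul (c1 p) (c0 q))) (Cmul (c2 p) (c3 q))) (Cmul (c3 p) (c2 q)))
    (Cadd (Cadd (Csub (Cmul (c0 p) (c2 q)) (Cmul (c1 p) (c3 q))) (Cmul (c2 p) (c0 q))) (Cmul (c3 p) (c1 q)))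
    (Cadd (Csub (Cadd (Cmul (c0 p) (c3 q)) (Cmul (c1 p) (c2 q))) (Cmul (c2 p) (c1 q))) (Cmul (c3 p) (c0 q))).
Definition HCcscal (c : Cx) (p : HC) : HC :=
  mkHC (Cmul c (c0 p)) (Cmul c (c1 p)) (Cmul c (c2 p)) (Cmul c (c3 p)).
Definition HofH (q : Hq) : HC :=
  mkHC (mkC (q0 q) 0) (mkC (q1 q) 0) (mkC (q2 q) 0) (mkC (q3 q) 0).
Fixpoint HCpow (p : HC) (n : nat) : HC :=
  match n with
  | O => HC1
  | S m => HCmul (HCpow p m) p
  end.

Definition HC_cv (u : nat -> HC) (l : HC) : Prop :=
  C_cv (fun n => c0 (u n)) (c0 l) /\ C_cv (fun n => c1 (u n)) (c1 l) /\
  C_cv (fun n => c2 (u n)) (c2 l) /\ C_cv (fun n => c3 (u n)) (c3 l).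
Fixpoint HCpartial (f : nat -> HC) (n : nat) : HC :=
  match n with
  | O => f O
  | S m => HCadd (HCpartial f m) (f (S m))
  end.
Definition HC_series (f : nat -> HC) : HC :=
  epsilon (inhabits HC0) (fun l => HC_cv (HCpartial f) l).

Definition HCexp (X : HC) : HC :=
  HC_series (fun j => HCcscal (mkC (/ INR (Factorial.fact j)) 0) (HCpow X j)).

Definition in_QR (Rset : Cx -> Prop) (q : Hq) : Prop :=
  Hvnonzero q /\ Rset (mkC (q0 q) (Hvnorm q)).

(* For q = a + v with v <> 0 let u = v/|v|, so that u^2 = -1. Complex
   quaternions A + B u (A, B complex) form a commutative subalgebra, and
   A + B u |-> (A + iB, A - iB) is an algebra isomorphism onto C x C; it is
   continuous, so it commutes with the exponential series. Under it the real
   quaternion x + y u goes to (x + iy, x - iy); in particular each term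
   (alpha+k)^{-q} goes to ((alpha+k)^{-w}, conj ((alpha+k)^{-w})) with
   w = a + i|v|, hence zeta(q,alpha) goes to (zeta(w,alpha), conj zeta(w,alpha))
   and e^{-i pi q} to (e^{-i pi w}, e^{-i pi conj w}). The first coordinate of
   zeta(q,alpha) + e^{-i pi q} zeta(q,1-alpha) is therefore
   zeta(w,alpha) + e^{-i pi w} zeta(w,1-alpha), which is nonzero as w is in R.
   Convergence of the complex exponential series to exp(x)(cos y + i sin y)
   is obtained by checking that its real and imaginary parts, as functions
   of t, solve the linear ODE that characterizes t |-> exp(t (x + iy)). *)

From Stdlib Require Import Reals Lra ClassicalEpsilon.
From Coquelicot Require Import Coquelicot.
Open Scope R_scope.

Lemma Cx_ext z w : Cre z = Cre w -> Cim z = Cim w -> z = w.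
Proof. destruct z, w; simpl; intros -> ->; reflexivity. Qed.

Ltac Cx_field := apply Cx_ext; simpl; field.

Definition C1 : Cx := mkC 1 0.

Fixpoint Cpown (z : Cx) (n : nat) : Cx :=
  match n with O => C1 | S m => Cmul (Cpown z m) z end.

Lemma Cre_partial f n : Cre (Cpartial f n) = sum_f_R0 (fun k => Cre (f k)) n.
Proof. induction n as [|n IH]; simpl; rewrite ?IH; reflexivity. Qed.

Lemma Cim_partial f n : Cim (Cpartial f n) = sum_f_R0 (fun k => Cim (f k)) n.
Proof. induction n as [|n IH]; simpl; rewrite ?IH; reflexivity. Qed.

Lemma Un_cv_const c : Un_cv (fun _ => c) c.
Proof. apply is_lim_seq_Reals, is_lim_seq_const. Qed.

Lemma Un_cv_scal a u l : Un_cv u l -> Un_cv (fun n => a * u n) (a * l).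
Proof. intros Hu; apply CV_mult; [apply Un_cv_const | exact Hu]. Qed.

Lemma C_cv_ext f g l : (forall n, f n = g n) -> C_cv f l -> C_cv g l.
Proof. intros H [H1 H2]; split; eapply Un_cv_ext; eauto; intros; simpl; rewrite H; auto. Qed.

Lemma C_cv_unique f l m : C_cv f l -> C_cv f m -> l = m.
Proof. intros [F1 F2] [G1 G2]; apply Cx_ext; eapply UL_sequence; eauto. Qed.

Lemma C_cv_lincomb c d f g l m (h : nat -> Cx) L :
  (forall n, h n = Cadd (Cmul c (f n)) (Cmul d (g n))) ->
  L = Cadd (Cmul c l) (Cmul d m) ->
  C_cv f l -> C_cv g m -> C_cv h L.
Proof.
  intros Hh -> [F1 F2] [G1 G2].
  apply (C_cv_ext (fun n => Cadd (Cmul c (f n)) (Cmul d (g n)))); [intros; symmetry; apply Hh|].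
  split; simpl; apply CV_plus; unfold Rminus;
    try apply CV_plus; try apply CV_opp; apply Un_cv_scal; assumption.
Qed.

Lemma Cpown_bound z n :
  Rabs (Cre (Cpown z n)) + Rabs (Cim (Cpown z n)) <= (Rabs (Cre z) + Rabs (Cim z)) ^ n.
Proof.
  induction n as [|n IH]; simpl.
  - rewrite Rabs_R1, Rabs_R0; lra.
  - set (a := Cre (Cpown z n)) in *; set (b := Cim (Cpown z n)) in *.
    set (x := Cre z); set (y := Cim z).
    assert (Hre : Rabs (a * x - b * y) <= Rabs a * Rabs x + Rabs b * Rabs y).
    { unfold Rminus; eapply Rle_trans; [apply Rabs_triang|]. rewrite Rabs_Ropp, !Rabs_mult; lra. }
    assert (Him : Rabs (a * y + b * x) <= Rabs a * Rabs y + Rabs b * Rabs x).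
    { eapply Rle_trans; [apply Rabs_triang|]. rewrite !Rabs_mult; lra. }
    assert ((Rabs a + Rabs b) * (Rabs x + Rabs y) <= (Rabs x + Rabs y) ^ n * (Rabs x + Rabs y)).
    { apply Rmult_le_compat_r; [pose proof (Rabs_pos x); pose proof (Rabs_pos y); lra | exact IH]. }
    lra.
Qed.

Section FactorialSeries.

Variables (c : nat -> R) (M : R).
Hypothesis c_bound : forall n, Rabs (c n) <= M ^ n.

Let a n := c n / INR (Factorial.fact n).

Lemma CV_disk_fact r : CV_disk a r.
Proof.
  apply (@ex_series_le R_AbsRing R_CompleteNormedModule _
           (fun n => / INR (Factorial.fact n) * (M * Rabs r) ^ n)).
  2: { exists (exp (M * Rabs r)); apply is_pseries_R, is_exp_Reals. }
  intros n. change (norm ?u) with (Rabs u). rewrite Rabs_Rabsolu.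
  unfold a, Rdiv. rewrite !Rabs_mult, Rabs_inv, <- RPow_abs, Rpow_mult_distr.
  rewrite (Rabs_right (INR (Factorial.fact n))) by (apply Rle_ge, pos_INR).
  assert (0 < / INR (Factorial.fact n)) by (apply Rinv_0_lt_compat, INR_fact_lt_0).
  assert (0 <= Rabs r ^ n) by (apply pow_le, Rabs_pos).
  replace (/ INR (Factorial.fact n) * (M ^ n * Rabs r ^ n))
    with (M ^ n * / INR (Factorial.fact n) * Rabs r ^ n) by ring.
  apply Rmult_le_compat_r; [assumption|]. apply Rmult_le_compat_r; [lra | apply c_bound].
Qed.

Lemma CV_radius_fact x : Rbar_lt (Rabs x) (CV_radius a).
Proof.
  destruct (Lub_Rbar_correct (CV_disk a)) as [ub _].
  specialize (ub (Rabs x + 1) (CV_disk_fact _)). unfold CV_radius.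
  destruct (Lub_Rbar (CV_disk a)); simpl in *; auto; lra.
Qed.

Lemma is_derive_PSeries_fact t :
  is_derive (PSeries a) t (PSeries (fun n => c (S n) / INR (Factorial.fact n)) t).
Proof.
  rewrite <- (PSeries_ext (PS_derive a)).
  - apply is_derive_PSeries, CV_radius_fact.
  - intros n. unfold PS_derive, a. rewrite fact_simpl, mult_INR.
    pose proof (INR_fact_neq_0 n). assert (INR (S n) <> 0) by (rewrite S_INR; pose proof (pos_INR n); lra).
    field; auto.
Qed.

Lemma Un_cv_PSeries_fact_1 : Un_cv (sum_f_R0 a) (PSeries a 1).
Proof.
  apply (Un_cv_ext (sum_f_R0 (fun n => a n * 1 ^ n))).
  - intros n; apply sum_eq; intros k _; rewrite pow1; ring.
  - apply is_series_Reals, is_pseries_R, PSeries_correct, CV_disk_correct, CV_disk_fact.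
Qed.

End FactorialSeries.

Lemma PSeries_fact_lincomb c d M x y t :
  (forall n, Rabs (c n) <= M ^ n) -> (forall n, Rabs (d n) <= M ^ n) ->
  PSeries (fun n => (x * c n + y * d n) / INR (Factorial.fact n)) t =
  x * PSeries (fun n => c n / INR (Factorial.fact n)) t + y * PSeries (fun n => d n / INR (Factorial.fact n)) t.
Proof.
  intros Hc Hd.
  rewrite (PSeries_ext _ (PS_plus (PS_scal x (fun n => c n / INR (Factorial.fact n)))
                                  (PS_scal y (fun n => d n / INR (Factorial.fact n))))).
  - rewrite PSeries_plus, !PSeries_scal; [reflexivity | |];
      apply ex_pseries_scal, CV_disk_correct; try apply Rmult_comm.
    + apply (CV_disk_fact _ _ Hc).
    + apply (CV_disk_fact _ _ Hd).
  - intros n; unfold PS_plus, PS_scal; change (plus ?u ?v) with (u + v);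
      change (scal ?u ?v) with (u * v); field; apply INR_fact_neq_0.
Qed.

Lemma is_derive_PSeries_fact_rec c d M x y t :
  (forall n, Rabs (c n) <= M ^ n) -> (forall n, Rabs (d n) <= M ^ n) ->
  (forall n, c (S n) = x * c n + y * d n) ->
  is_derive (PSeries (fun n => c n / INR (Factorial.fact n))) t
    (x * PSeries (fun n => c n / INR (Factorial.fact n)) t
     + y * PSeries (fun n => d n / INR (Factorial.fact n)) t).
Proof.
  intros Hc Hd Hrec.
  rewrite <- (PSeries_fact_lincomb c d M) by assumption.
  rewrite <- (PSeries_ext (fun n => c (S n) / INR (Factorial.fact n))) by (intros; rewrite Hrec; reflexivity).
  apply (is_derive_PSeries_fact _ _ Hc).
Qed.

Lemma is_derive_0_eq F a b : (forall t, is_derive F t 0) -> F a = F b.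
Proof.
  intros HF. destruct (MVT_gen F a b (fun _ => 0)) as [t [_ Ht]].
  - intros; apply HF.
  - intros t _. apply continuity_pt_filterlim, (@ex_derive_continuous R_AbsRing R_NormedModule).
    eexists; apply HF.
  - lra.
Qed.

Lemma rotation_ode_solution (f g : R -> R) x y :
  (forall t, is_derive f t (x * f t - y * g t)) ->
  (forall t, is_derive g t (y * f t + x * g t)) ->
  f 0 = 1 -> g 0 = 0 ->
  forall t, f t = exp (t * x) * cos (t * y) /\ g t = exp (t * x) * sin (t * y).
Proof.
  intros Df Dg f0 g0 t.
  assert (Ef : forall t, Derive f t = x * f t - y * g t) by (intros; apply is_derive_unique, Df).
  assert (Eg : forall t, Derive g t = y * f t + x * g t) by (intros; apply is_derive_unique, Dg).
  (* both quantities are the coordinates of exp(-t(x+iy)) (f + i g), which is constant *)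
  set (F := fun t => exp (-(t * x)) * (f t * cos (t * y) + g t * sin (t * y))).
  set (G := fun t => exp (-(t * x)) * (g t * cos (t * y) - f t * sin (t * y))).
  assert (DF : forall t, is_derive F t 0).
  { intros s; unfold F; auto_derive.
    - repeat split; eexists; [apply Df | apply Dg].
    - rewrite Ef, Eg; ring. }
  assert (DG : forall t, is_derive G t 0).
  { intros s; unfold G; auto_derive.
    - repeat split; eexists; [apply Dg | apply Df].
    - rewrite Ef, Eg; ring. }
  assert (F1 : F t = 1).
  { rewrite (is_derive_0_eq F t 0 DF); unfold F; rewrite f0, g0, !Rmult_0_l, Ropp_0, exp_0, ?cos_0, ?sin_0; ring. }
  assert (G0 : G t = 0).
  { rewrite (is_derive_0_eq G t 0 DG); unfold G; rewrite f0, g0, !Rmult_0_l, Ropp_0, exp_0, ?cos_0, ?sin_0; ring. }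
  unfold F, G in F1, G0.
  assert (Ex : exp (t * x) * exp (- (t * x)) = 1) by (rewrite <- exp_plus, Rplus_opp_r; apply exp_0).
  pose proof (sin2_cos2 (t * y)) as Hsc; unfold Rsqr in Hsc.
  set (e := exp (- (t * x))) in *; set (co := cos (t * y)) in *; set (si := sin (t * y)) in *.
  split.
  - transitivity (exp (t * x) * (co * (e * (f t * co + g t * si)) - si * (e * (g t * co - f t * si)))).
    + transitivity (f t * (exp (t * x) * e) * (si * si + co * co)); [rewrite Ex, Hsc|]; ring.
    + rewrite F1, G0; ring.
  - transitivity (exp (t * x) * (si * (e * (f t * co + g t * si)) + co * (e * (g t * co - f t * si)))).
    + transitivity (g t * (exp (t * x) * e) * (si * si + co * co)); [rewrite Ex, Hsc|]; ring.
    + rewrite F1, G0; ring.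
Qed.

Definition expterm (z : Cx) (j : nat) : Cx := Cscal (/ INR (Factorial.fact j)) (Cpown z j).

Lemma Cexp_series z : C_cv (Cpartial (expterm z)) (Cexp z).
Proof.
  set (x := Cre z); set (y := Cim z); set (M := Rabs x + Rabs y).
  set (cr := fun n => Cre (Cpown z n)); set (ci := fun n => Cim (Cpown z n)).
  assert (Hr : forall n, Rabs (cr n) <= M ^ n).
  { intros n; pose proof (Cpown_bound z n); pose proof (Rabs_pos (ci n)); unfold cr, ci, M, x, y in *; lra. }
  assert (Hi : forall n, Rabs (ci n) <= M ^ n).
  { intros n; pose proof (Cpown_bound z n); pose proof (Rabs_pos (cr n)); unfold cr, ci, M, x, y in *; lra. }
  set (f := PSeries (fun n => cr n / INR (Factorial.fact n))).
  set (g := PSeries (fun n => ci n / INR (Factorial.fact n))).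
  assert (Df : forall t, is_derive f t (x * f t - y * g t)).
  { intros t; replace (x * f t - y * g t) with (x * f t + - y * g t) by ring.
    apply (is_derive_PSeries_fact_rec _ _ M); auto.
    intros n; unfold cr, ci; simpl; fold x y; ring. }
  assert (Dg : forall t, is_derive g t (y * f t + x * g t)).
  { intros t; rewrite (Rplus_comm (y * f t)).
    apply (is_derive_PSeries_fact_rec _ _ M); auto.
    intros n; unfold cr, ci; simpl; fold x y; ring. }
  assert (f0 : f 0 = 1) by (unfold f; rewrite PSeries_0; unfold cr; simpl; field).
  assert (g0 : g 0 = 0) by (unfold g; rewrite PSeries_0; unfold ci; simpl; field).
  destruct (rotation_ode_solution f g x y Df Dg f0 g0 1) as [E1 E2].
  rewrite !Rmult_1_l in E1, E2.
  split; simpl; fold x y.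
  - rewrite <- E1; apply (Un_cv_ext (sum_f_R0 (fun n => cr n / INR (Factorial.fact n)))).
    + intros n; rewrite Cre_partial; apply sum_eq; intros k _; unfold expterm, cr; simpl.
      unfold Rdiv; ring.
    + apply (Un_cv_PSeries_fact_1 _ _ Hr).
  - rewrite <- E2; apply (Un_cv_ext (sum_f_R0 (fun n => ci n / INR (Factorial.fact n)))).
    + intros n; rewrite Cim_partial; apply sum_eq; intros k _; unfold expterm, ci; simpl.
      unfold Rdiv; ring.
    + apply (Un_cv_PSeries_fact_1 _ _ Hi).
Qed.

Lemma Rpower_le_shift_diff a b : 1 < a -> 1 < b ->
  Rpower b (- a) <= (Rpower (b - 1) (1 - a) - Rpower b (1 - a)) / (a - 1).
Proof.
  intros Ha Hb.
  destruct (MVT_cor2 (fun t => Rpower t (1 - a)) (fun t => (1 - a) * Rpower t (1 - a - 1)) (b - 1) b)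
    as [c [Hc Hcb]].
  - lra.
  - intros c Hc. apply derivable_pt_lim_power. lra.
  - replace (1 - a - 1) with (- a) in Hc by ring.
    assert (Rpower b (- a) <= Rpower c (- a)).
    { unfold Rpower. apply Rlt_le, exp_increasing.
      assert (ln c < ln b) by (apply ln_increasing; lra). nra. }
    apply (Rmult_le_reg_r (a - 1)); [lra|].
    unfold Rdiv. rewrite Rmult_assoc, Rinv_l, Rmult_1_r by lra.
    replace (Rpower (b - 1) (1 - a) - Rpower b (1 - a))
      with (- (Rpower b (1 - a) - Rpower (b - 1) (1 - a))) by ring.
    rewrite Hc. nra.
Qed.

Lemma ex_series_Rpower_shift a alpha : 1 < a -> 0 < alpha ->
  ex_series (fun k => Rpower (alpha + INR k) (- a)).
Proof.
  intros Ha Halpha.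
  set (e := fun k => Rpower (alpha + INR k) (- a)).
  set (h := fun t => Rpower t (1 - a)).
  assert (He : forall k, 0 < e k) by (intros; apply exp_pos).
  assert (Hh : forall t, 0 < h t) by (intros; apply exp_pos).
  (* telescoping comparison with the antiderivative t^(1-a)/(1-a) *)
  assert (Hb : forall n, sum_f_R0 e n <= e 0%nat + (h alpha - h (alpha + INR n)) / (a - 1)).
  { induction n as [|n IH]; simpl sum_f_R0.
    - rewrite Rplus_0_r, Rminus_diag; unfold Rdiv; lra.
    - assert (e (S n) <= (h (alpha + INR n) - h (alpha + INR (S n))) / (a - 1)).
      { unfold e, h. rewrite S_INR.
        replace (alpha + INR n) with (alpha + (INR n + 1) - 1) at 1 by ring.
        apply Rpower_le_shift_diff; auto. pose proof (pos_INR n). lra. }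
      assert ((h alpha - h (alpha + INR n)) / (a - 1) + (h (alpha + INR n) - h (alpha + INR (S n))) / (a - 1)
              = (h alpha - h (alpha + INR (S n))) / (a - 1)) by (field; lra).
      lra. }
  destruct (growing_cv (sum_f_R0 e)) as [l Hl].
  - intros n. simpl. pose proof (He (S n)). lra.
  - exists (e 0%nat + h alpha / (a - 1)). intros x [i ->].
    pose proof (Hb i). pose proof (Hh (alpha + INR i)).
    assert (0 < / (a - 1)) by (apply Rinv_0_lt_compat; lra).
    unfold Rdiv in *. nra.
  - exists l. apply is_series_Reals. exact Hl.
Qed.

Lemma C_series_correct f : ex_series (fun k => Cre (f k)) -> ex_series (fun k => Cim (f k)) ->
  C_cv (Cpartial f) (C_series f).
Proof.
  intros Er Ei.
  assert (Hf : C_cv (Cpartial f) (mkC (Series (fun k => Cre (f k))) (Series (fun k => Cim (f k))))).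
  { split; simpl; [apply (Un_cv_ext (sum_f_R0 (fun k => Cre (f k)))) | apply (Un_cv_ext (sum_f_R0 (fun k => Cim (f k))))];
      intros; rewrite ?Cre_partial, ?Cim_partial; auto;
      apply is_series_Reals, Series_correct; assumption. }
  unfold C_series. apply (epsilon_spec (inhabits C0) (fun l => C_cv (Cpartial f) l)). eauto.
Qed.

Lemma hurwitz_cv s alpha : 1 < Cre s -> 0 < alpha ->
  C_cv (Cpartial (fun k => Cpow_pos (alpha + INR k) (Copp s))) (hurwitz s alpha).
Proof.
  intros Hs Halpha.
  set (t := fun k => Cpow_pos (alpha + INR k) (Copp s)).
  assert (Ht : forall k, Rabs (Cre (t k)) <= Rpower (alpha + INR k) (- Cre s) /\
                         Rabs (Cim (t k)) <= Rpower (alpha + INR k) (- Cre s)).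
  { intros k. unfold t, Cpow_pos, Cexp, Cscal, Rpower; simpl.
    rewrite !Rabs_mult, (Rabs_right (exp _)) by (apply Rle_ge, Rlt_le, exp_pos).
    rewrite (Rmult_comm (- Cre s)).
    pose proof (exp_pos (ln (alpha + INR k) * - Cre s)).
    assert (Rabs (cos (ln (alpha + INR k) * - Cim s)) <= 1) by apply Rabs_le, COS_bound.
    assert (Rabs (sin (ln (alpha + INR k) * - Cim s)) <= 1) by apply Rabs_le, SIN_bound.
    split; nra. }
  apply C_series_correct;
    refine (@ex_series_le R_AbsRing R_CompleteNormedModule _ _ _ (ex_series_Rpower_shift _ _ Hs Halpha));
    intros n; apply Ht.
Qed.

Lemma HC_series_eq f l : HC_cv (HCpartial f) l -> HC_series f = l.
Proof.
  intros H. unfold HC_series.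
  pose proof (epsilon_spec (inhabits HC0) (fun l => HC_cv (HCpartial f) l) (ex_intro _ l H)) as H'.
  destruct H as [A [B [C D]]], H' as [A' [B' [C' D']]].
  destruct l; simpl in *; destruct (epsilon _ _); simpl in *; f_equal; eapply C_cv_unique; eauto.
Qed.

Section Slice.

Variables u1 u2 u3 : R.

Definition slice (A B : Cx) : HC := mkHC A (Cscal u1 B) (Cscal u2 B) (Cscal u3 B).

(* A + B u corresponds to the pair (A + iB, A - iB) *)
Definition slice_pair (P M : Cx) : HC :=
  slice (Cscal (/ 2) (Cadd P M)) (Cmul (mkC 0 (- / 2)) (Csub P M)).

Lemma slice_pair_add P M P' M' :
  HCadd (slice_pair P M) (slice_pair P' M') = slice_pair (Cadd P P') (Cadd M M').
Proof. unfold slice_pair, slice, HCadd; simpl; f_equal; Cx_field. Qed.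

Lemma slice_pair_cscal c P M :
  HCcscal c (slice_pair P M) = slice_pair (Cmul c P) (Cmul c M).
Proof. unfold slice_pair, slice, HCcscal; simpl; f_equal; Cx_field. Qed.

Lemma HofH_slice_pair z :
  HofH (mkH (Cre z) (u1 * Cim z) (u2 * Cim z) (u3 * Cim z)) = slice_pair z (Cconj z).
Proof. unfold HofH, slice_pair, slice; simpl; f_equal; Cx_field. Qed.

Lemma HC_cv_slice_pair (h : nat -> HC) P M lP lM :
  (forall n, h n = slice_pair (P n) (M n)) -> C_cv P lP -> C_cv M lM ->
  HC_cv h (slice_pair lP lM).
Proof.
  intros Hh HP HM; unfold slice_pair, slice; split; [|split; [|split]]; simpl;
    [ apply (C_cv_lincomb (mkC (/ 2) 0) (mkC (/ 2) 0) P M lP lM)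
    | apply (C_cv_lincomb (mkC 0 (- u1 / 2)) (mkC 0 (u1 / 2)) P M lP lM)
    | apply (C_cv_lincomb (mkC 0 (- u2 / 2)) (mkC 0 (u2 / 2)) P M lP lM)
    | apply (C_cv_lincomb (mkC 0 (- u3 / 2)) (mkC 0 (u3 / 2)) P M lP lM) ];
    try (intros; rewrite Hh); try Cx_field; assumption.
Qed.

Hypothesis u_unit : u1 * u1 + u2 * u2 + u3 * u3 = 1.

Lemma slice_mul A B A' B' :
  HCmul (slice A B) (slice A' B') =
  slice (Csub (Cmul A A') (Cmul B B')) (Cadd (Cmul A B') (Cmul B A')).
Proof.
  unfold slice, HCmul, Csub; simpl; f_equal; try Cx_field.
  transitivity (Cadd (Cmul A A') (Copp (Cscal (u1 * u1 + u2 * u2 + u3 * u3) (Cmul B B')))).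
  - Cx_field.
  - rewrite u_unit; Cx_field.
Qed.

Lemma slice_eq0 A B : slice A B = HC0 -> A = C0 /\ B = C0.
Proof.
  intros E; split; [exact (f_equal c0 E)|].
  assert (E1 : Cscal u1 B = C0) by exact (f_equal c1 E).
  assert (E2 : Cscal u2 B = C0) by exact (f_equal c2 E).
  assert (E3 : Cscal u3 B = C0) by exact (f_equal c3 E).
  transitivity (Cadd (Cscal u1 (Cscal u1 B)) (Cadd (Cscal u2 (Cscal u2 B)) (Cscal u3 (Cscal u3 B)))).
  - apply Cx_ext; simpl;
      [rewrite <- (Rmult_1_l (Cre B)) at 1 | rewrite <- (Rmult_1_l (Cim B)) at 1];
      rewrite <- u_unit; ring.
  - rewrite E1, E2, E3; Cx_field.
Qed.

Lemma slice_pair_mul P M P' M' :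
  HCmul (slice_pair P M) (slice_pair P' M') = slice_pair (Cmul P P') (Cmul M M').
Proof. unfold slice_pair; rewrite slice_mul; unfold slice, Csub; f_equal; Cx_field. Qed.

Lemma slice_pair_eq0 P M : slice_pair P M = HC0 -> P = C0.
Proof.
  unfold slice_pair; intros [EA EB]%slice_eq0.
  assert (Re := f_equal Cre EA); assert (Im := f_equal Cim EA).
  assert (Re' := f_equal Cre EB); assert (Im' := f_equal Cim EB).
  unfold Csub in *; simpl in *; apply Cx_ext; simpl; lra.
Qed.

Lemma HCpow_slice_pair P M j : HCpow (slice_pair P M) j = slice_pair (Cpown P j) (Cpown M j).
Proof.
  induction j as [|j IH]; simpl.
  - unfold slice_pair, slice, HC1, C1; simpl; f_equal; Cx_field.
  - rewrite IH; apply slice_pair_mul.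
Qed.

Lemma HCpartial_slice_pair f P M n : (forall j, f j = slice_pair (P j) (M j)) ->
  HCpartial f n = slice_pair (Cpartial P n) (Cpartial M n).
Proof. intros H; induction n as [|n IH]; simpl; rewrite H; [|rewrite IH, slice_pair_add]; reflexivity. Qed.

Lemma HCexp_slice_pair P M : HCexp (slice_pair P M) = slice_pair (Cexp P) (Cexp M).
Proof.
  apply HC_series_eq, (HC_cv_slice_pair _ (Cpartial (expterm P)) (Cpartial (expterm M)));
    [| apply Cexp_series ..].
  intros n; apply HCpartial_slice_pair; intros j.
  rewrite HCpow_slice_pair, slice_pair_cscal; unfold expterm; f_equal; Cx_field; apply INR_fact_neq_0.
Qed.

End Slice.

Definition Hcx (q : Hq) : Cx := mkC (q0 q) (Hvnorm q).

Definition Hembed (q : Hq) (z : Cx) : Hq :=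
  mkH (Cre z) (q1 q / Hvnorm q * Cim z) (q2 q / Hvnorm q * Cim z) (q3 q / Hvnorm q * Cim z).

Lemma Hvnorm_pos q : Hvnonzero q -> 0 < Hvnorm q.
Proof.
  intros Hq; apply sqrt_lt_R0.
  assert (sq : forall x, x <> 0 -> 0 < x ^ 2) by (intros x Hx; destruct (Rdichotomy _ _ Hx); nra).
  destruct (Req_dec (q1 q) 0) as [E1|E1]; [destruct (Req_dec (q2 q) 0) as [E2|E2];
    [destruct (Req_dec (q3 q) 0) as [E3|E3] |] |].
  - exfalso; auto.
  - specialize (sq _ E3); nra.
  - specialize (sq _ E2); nra.
  - specialize (sq _ E1); nra.
Qed.

Lemma Hvnorm_direction_unit q : Hvnonzero q ->
  q1 q / Hvnorm q * (q1 q / Hvnorm q) + q2 q / Hvnorm q * (q2 q / Hvnorm q)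
  + q3 q / Hvnorm q * (q3 q / Hvnorm q) = 1.
Proof.
  intros Hq; pose proof (Hvnorm_pos q Hq) as Hpos.
  assert (Hsq : Hvnorm q * Hvnorm q = q1 q ^ 2 + q2 q ^ 2 + q3 q ^ 2).
  { unfold Hvnorm; apply sqrt_sqrt; nra. }
  transitivity ((q1 q ^ 2 + q2 q ^ 2 + q3 q ^ 2) / (Hvnorm q * Hvnorm q)); [field | rewrite <- Hsq; field]; lra.
Qed.

Lemma HofH_Hembed q z :
  HofH (Hembed q z) =
  slice_pair (q1 q / Hvnorm q) (q2 q / Hvnorm q) (q3 q / Hvnorm q) z (Cconj z).
Proof. apply HofH_slice_pair. Qed.

Lemma Hembed_Hcx q : Hvnonzero q -> Hembed q (Hcx q) = q.
Proof.
  intros Hq; pose proof (Hvnorm_pos q Hq).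
  destruct q; unfold Hembed, Hcx; simpl; f_equal; field; lra.
Qed.

Lemma H_series_eq f l : H_cv (Hpartial f) l -> H_series f = l.
Proof.
  intros H. unfold H_series.
  pose proof (epsilon_spec (inhabits H0) (fun l => H_cv (Hpartial f) l) (ex_intro _ l H)) as H'.
  destruct H as [A [B [C D]]], H' as [A' [B' [C' D']]].
  destruct l; simpl in *; destruct (epsilon _ _); simpl in *; f_equal; eapply UL_sequence; eauto.
Qed.

Lemma Hpartial_Hembed q f t n : (forall k, f k = Hembed q (t k)) ->
  Hpartial f n = Hembed q (Cpartial t n).
Proof.
  intros Hf; induction n as [|n IH]; simpl; rewrite Hf; [reflexivity|].
  rewrite IH; unfold Hembed, Hadd; simpl; f_equal; ring.
Qed.

Lemma H_cv_Hembed q h t l : (forall n, h n = Hembed q (t n)) -> C_cv t l -> H_cv h (Hembed q l).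
Proof.
  intros Hh [Hre Him]; repeat split; simpl;
    (eapply Un_cv_ext; [intros n; rewrite Hh; reflexivity|]); simpl;
    try apply Un_cv_scal; assumption.
Qed.

Lemma qpow_pos_opp x q : qpow_pos x (Hopp q) = Hembed q (Cpow_pos x (Copp (Hcx q))).
Proof.
  assert (Hn : Hvnorm (Hopp q) = Hvnorm q) by (unfold Hvnorm; simpl; f_equal; ring).
  unfold qpow_pos, Hembed, Cpow_pos, Cexp, Cscal, Rpower, Hcx; simpl; rewrite Hn.
  replace (ln x * - Hvnorm q) with (- (Hvnorm q * ln x)) by ring.
  rewrite cos_neg, sin_neg, (Rmult_comm (ln x) (- q0 q)); f_equal; unfold Rdiv; ring.
Qed.

Lemma qzeta_Hembed q alpha : 1 < q0 q -> 0 < alpha ->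
  qzeta q alpha = Hembed q (hurwitz (Hcx q) alpha).
Proof.
  intros Hq Halpha; apply H_series_eq.
  apply (H_cv_Hembed q _ (Cpartial (fun k => Cpow_pos (alpha + INR k) (Copp (Hcx q))))).
  - intros n; apply Hpartial_Hembed; intros k; apply qpow_pos_opp.
  - apply hurwitz_cv; assumption.
Qed.

Theorem proposition3 (Rset : Cx -> Prop)
  (HRre : forall w, Rset w -> 1 < Cre w)
  (HRconj : forall w, Rset w <-> Rset (Cconj w))
  (HRnz : forall w alpha, Rset w -> 0 < alpha < 1 ->
     Cadd (hurwitz w alpha)
          (Cmul (Cexp (Cmul C_minus_i_pi w)) (hurwitz w (1 - alpha))) <> C0) :
  forall (q : Hq), in_QR Rset q -> forall alpha, 0 < alpha < 1 ->
    HCadd (HofH (qzeta q alpha))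
          (HCmul (HCexp (HCcscal C_minus_i_pi (HofH q))) (HofH (qzeta q (1 - alpha))))
    <> HC0.
Proof.
  intros q [Hnz HR] alpha Halpha.
  pose proof (HRre _ HR) as Hq0; simpl in Hq0.
  pose proof (Hvnorm_direction_unit q Hnz) as Hu.
  assert (Hq : HofH q = slice_pair (q1 q / Hvnorm q) (q2 q / Hvnorm q) (q3 q / Hvnorm q)
                          (Hcx q) (Cconj (Hcx q))).
  { rewrite <- (Hembed_Hcx q Hnz) at 1; apply HofH_Hembed. }
  rewrite !qzeta_Hembed, !HofH_Hembed, Hq, slice_pair_cscal by lra.
  rewrite HCexp_slice_pair, slice_pair_mul, slice_pair_add by exact Hu.
  intros E; apply (HRnz (Hcx q) alpha HR Halpha), (slice_pair_eq0 _ _ _ Hu _ _ E).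
Qed.
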